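(* Let $k\geq2$ and let $a_1\leq a_2\leq\dots\leq a_k$ be positive integers with $\gcd(a_1,\dots,a_k)=1$, let $S=\langle a_1,\dots,a_k\rangle$, and let $\alpha\geq a_1a_2$ be an integer. Then $$n(S,\alpha)\leq a_1^{k-1}\left(\left\lfloor\frac{\alpha}{a_1}-a_2\right\rfloor+1\right)+\sum_{\lambda=0}^{a_2-1}\left(\left\lfloor a_1\cdot\frac{\lambda+\{\alpha/a_1\}}{a_2}\right\rfloor+1\right)^{k-1}.$$
   Context: $S=\langle a_1,\dots,a_k\rangle=\{\lambda_1a_1+\dots+\lambda_ka_k:\lambda_i\in\mathbb{Z}_{\geq0}\}$; $n(S,\alpha)$ is the number of elements $s\in S$ with $s\leq\alpha$; $\{t\}=t-\lfloor t\rfloor$ denotes the fractional part. *)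

From mathcomp Require Import all_boot all_order all_algebra.
From Stdlib Require Import ClassicalEpsilon.
Set Implicit Arguments. Unset Strict Implicit. Unset Printing Implicit Defensive.
Import Order.TTheory GRing.Theory Num.Theory.

(* The generators a_1,...,a_k are a 0, ..., a (k-1). *)
Definition in_semigroup (k : nat) (a : nat -> nat) (s : nat) : Prop :=
  exists lam : nat -> nat, s = \sum_(i < k) lam i * a i.

Definition in_semigroupb (k : nat) (a : nat -> nat) (s : nat) : bool :=
  if excluded_middle_informative (in_semigroup k a s) then true else false.

Definition nS (k : nat) (a : nat -> nat) (alpha : nat) : nat :=
  #|[set s : 'I_alpha.+1 | in_semigroupb k a s]|.

Definition fracr (t : rat) : rat := t - (Num.floor t)%:~R.

From mathcomp Require Import all_boot all_order all_algebra.
Import Order.TTheory GRing.Theory Num.Theory.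
From Stdlib Require Import ClassicalEpsilon.
From mathcomp Require Import zify ring.
Set Implicit Arguments. Unset Strict Implicit. Unset Printing Implicit Defensive.

(* Reducing the coefficients of a_2, ..., a_k modulo a_1 writes every s in S
   as s = m a_1 + sum_j v_j a_j with 0 <= v_j < a_1, so n(S, alpha) is at most
   the number of pairs (m, v) with m a_1 + sum_j v_j a_j <= alpha.  Write
   alpha = q a_1 + r.  For m > q there is no such v; for m <= q - a_2 there are
   at most a_1^(k-1); for m = q - lambda with lambda < a_2 every v_j satisfies
   v_j a_2 <= v_j a_j <= lambda a_1 + r, which leaves at most
   (floor((lambda a_1 + r) / a_2) + 1)^(k-1) choices. *)

Lemma card_ord_leq (A L : nat) : #|[pred i : 'I_A | i <= L]| <= L.+1.
Proof.
have := @leq_card_in _ _ (fun i : 'I_A => (inord i : 'I_L.+1)) [pred i : 'I_A | i <= L].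
rewrite card_ord; apply=> i j i_le j_le /(congr1 (@nat_of_ord _)).
by rewrite !inordK ?ltnS // => /val_inj.
Qed.

Section ResidueCount.
Variables (n : nat) (a : nat -> nat) (alpha : nat).
Local Notation A := (a 0).
Local Notation B := (a 1).
Hypothesis A_gt0 : 0 < A.

Definition residue_weight (v : {ffun 'I_n -> 'I_A}) := \sum_(j < n) v j * a j.+1.

Definition fibre (m : nat) :=
  [set v : {ffun 'I_n -> 'I_A} | m * A + residue_weight v <= alpha].

Lemma in_semigroup_residue s : in_semigroup n.+1 a s ->
  exists m (v : {ffun 'I_n -> 'I_A}), s = m * A + residue_weight v.
Proof.
case=> lam ->; rewrite big_ord_recl /=.
exists (lam 0 + \sum_(j < n) lam j.+1 %/ A * a j.+1).
exists [ffun j : 'I_n => Ordinal (ltn_pmod (lam j.+1) A_gt0)].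
rewrite /residue_weight mulnDl big_distrl /= -addnA -big_split /=; congr (_ + _).
by apply: eq_bigr => j _; rewrite ffunE /= mulnAC -mulnDl -divn_eq.
Qed.

Lemma nS_le_sum_card_fibre : nS n.+1 a alpha <= \sum_(m < alpha.+1) #|fibre m|.
Proof.
set D := [set x : 'I_alpha.+1 * {ffun 'I_n -> 'I_A} | x.2 \in fibre x.1].
have -> : \sum_(m < alpha.+1) #|fibre m| = #|D|.
  under eq_bigr => m _ do rewrite -sum1_card.
  by rewrite -sum1_card pair_big_dep; apply: eq_bigl => x; rewrite !inE.
pose f (x : 'I_alpha.+1 * {ffun 'I_n -> 'I_A}) : 'I_alpha.+1 :=
  inord (x.1 * A + residue_weight x.2).
apply: leq_trans (leq_imset_card f D).
apply/subset_leq_card/subsetP => s; rewrite inE /in_semigroupb.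
case: excluded_middle_informative => // /in_semigroup_residue [m [v s_eq]] _.
have m_lt : m < alpha.+1.
  apply: leq_ltn_trans (ltn_ord s); rewrite s_eq.
  by apply: leq_trans (leq_addr _ _); rewrite leq_pmulr.
apply/imsetP; exists (Ordinal m_lt, v); first by rewrite !inE /= -s_eq -ltnS.
by apply: ord_inj; rewrite inordK /= -s_eq.
Qed.

Lemma card_fibre_le_pow m : #|fibre m| <= A ^ n.
Proof. by rewrite -[A in A ^ _]card_ord -[n in _ ^ n]card_ord -card_ffun max_card. Qed.

Lemma fibre_eq0 m : alpha < m * A -> fibre m = set0.
Proof.
move=> lt_alpha; apply/setP => v; rewrite !inE; apply/negbTE.
by rewrite -ltnNge (leq_trans lt_alpha) ?leq_addr.
Qed.

Hypothesis B_gt0 : 0 < B.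
Hypothesis B_min : forall j, j < n -> B <= a j.+1.

Lemma card_fibre_le_quot m : #|fibre m| <= ((alpha - m * A) %/ B).+1 ^ n.
Proof.
set L := (alpha - m * A) %/ B.
have fibre_on : fibre m \subset ffun_on_mem 'I_n (mem [pred i : 'I_A | i <= L]).
  apply/subsetP => v; rewrite inE => v_in; apply/ffun_onP => j.
  rewrite inE /L leq_divRL // leq_subRL; last exact: leq_trans (leq_addr _ _) v_in.
  apply: leq_trans v_in; rewrite leq_add2l /residue_weight (bigD1 j) //=.
  by rewrite (leq_trans _ (leq_addr _ _)) ?leq_mul2l ?B_min ?orbT.
apply: leq_trans (subset_leq_card fibre_on) _.
rewrite card_ffun_on card_ord; have [->|n_gt0] := posnP n; first by rewrite !expn0.
by rewrite leq_exp2r // card_ord_leq.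
Qed.

Hypothesis AB_le : A * B <= alpha.

Lemma sum_card_fibre_le : \sum_(m < alpha.+1) #|fibre m| <=
  A ^ n * (alpha %/ A - B).+1 + \sum_(l < B) ((l * A + alpha %% A) %/ B).+1 ^ n.
Proof.
set q := alpha %/ A; set r := alpha %% A.
have B_le_q : B <= q by rewrite /q leq_divRL // mulnC.
have alpha_eq : alpha = q * A + r := divn_eq alpha A.
rewrite -(big_mkord xpredT (fun m => #|fibre m|)).
rewrite (@big_cat_nat _ _ _ q.+1) ?ltnS ?leq_div //=.
have tail_eq0 : \sum_(q.+1 <= m < alpha.+1) #|fibre m| = 0.
  rewrite big_nat_cond big1 // => m /andP[/andP[q_lt _] _].
  by rewrite fibre_eq0 ?cards0 // (leq_trans (ltn_ceil alpha A_gt0)) ?leq_mul.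
rewrite tail_eq0 addn0.
rewrite (@big_cat_nat _ _ _ (q - B + 1)) //=; last by lia.
apply: leq_add.
  apply: leq_trans (leq_sum _ (fun m (_ : true) => card_fibre_le_pow m)) _.
  by rewrite sum_nat_const_nat subn0 mulnC addn1.
apply: leq_trans (leq_sum _ (fun m (_ : true) => card_fibre_le_quot m)) _.
rewrite -{1}[q - B + 1]add0n big_addn (_ : q.+1 - (q - B + 1) = B); last by lia.
rewrite big_nat_rev big_mkord; apply/eq_leq/eq_bigr => l _.
have l_lt := ltn_ord l.
have lA_le : l * A <= q * A by rewrite leq_mul2r (leq_trans (ltnW l_lt) B_le_q) orbT.
rewrite (_ : 0 + B - l.+1 + (q - B + 1) = q - l); last by lia.
by rewrite mulnBl {1}alpha_eq; congr ((_ %/ _).+1 ^ _); lia.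
Qed.

End ResidueCount.

Lemma floor_natr_div (R : archiRealFieldType) (m d : nat) : 0 < d ->
  (Num.floor (m%:R / d%:R : R) = (m %/ d)%:Z)%R.
Proof.
move=> d_gt0; apply: floor_def.
rewrite ler_pdivlMr ?ltr0n // ltr_pdivrMr ?ltr0n //.
rewrite -[(_ + 1)%R]PoszD -!pmulrn -!natrM ler_nat ltr_nat.
by rewrite leq_divM addn1 ltn_ceil.
Qed.

Lemma fracr_natr_div (m d : nat) : 0 < d ->
  (fracr (m%:Q / d%:Q) = (m %% d)%N%:Q / d%:Q)%R.
Proof.
move=> d_gt0; rewrite /fracr floor_natr_div // {1}(divn_eq m d).
have d_neq0 : (d%:Q != 0)%R by rewrite pnatr_eq0 -lt0n.
by rewrite -pmulrn natrD natrM; field.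
Qed.

Theorem mainTheorem8 (k : nat) (a : nat -> nat) (alpha : nat) :
  2 <= k ->
  (forall i, i < k -> 0 < a i) ->
  (forall i j, i <= j -> j < k -> a i <= a j) ->
  \big[gcdn/0]_(i < k) a i = 1 ->
  a 0 * a 1 <= alpha ->
  ((nS k a alpha)%:Z <=
     (a 0%N)%:Z ^+ (k.-1) *
        (Num.floor ((alpha%:Q / (a 0%N)%:Q) - (a 1%N)%:Q) + 1) +
      \sum_(lam < a 1%N)
        (Num.floor ((a 0%N)%:Q * ((lam%:Q + fracr (alpha%:Q / (a 0%N)%:Q)) / (a 1%N)%:Q)) + 1)
          ^+ (k.-1))%R.
Proof.
case: k => [|[|n]] // _ a_gt0 a_mono _ AB_le /=.
have A_gt0 : 0 < a 0 by apply: a_gt0.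
have B_gt0 : 0 < a 1 by apply: a_gt0.
have B_min j : j < n.+1 -> a 1 <= a j.+1 by move=> j_lt; apply: a_mono.
have B_le_q : a 1 <= alpha %/ a 0 by rewrite leq_divRL // mulnC.
have A_neq0 : ((a 0)%:R != 0 :> rat)%R by rewrite pnatr_eq0 -lt0n.
have B_neq0 : ((a 1)%:R != 0 :> rat)%R by rewrite pnatr_eq0 -lt0n.
have floor_lam (l : nat) : (Num.floor ((a 0)%:Q * ((l%:Q + fracr (alpha%:Q / (a 0)%:Q))
    / (a 1)%:Q)) = ((l * a 0 + alpha %% a 0) %/ a 1)%:Z)%R.
  rewrite fracr_natr_div // -(floor_natr_div rat) //; congr Num.floor.
  by rewrite -!pmulrn natrD natrM; field; rewrite A_neq0 B_neq0.
under eq_bigr => l _ do rewrite floor_lam -PoszD addn1 -natz -natrX.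
rewrite floorDrz ?rpredN ?rpred_nat // floor_natr_div // floorN ?rpred_nat // intrKfloor.
rewrite subzn // -[Posz (a 0)]natz -natrX natz [(_ + 1)%R]addrC -intS -PoszM.
rewrite -natr_sum natz -PoszD lez_nat.
exact: leq_trans (nS_le_sum_card_fibre n.+1 alpha A_gt0)
  (sum_card_fibre_le A_gt0 B_gt0 B_min AB_le).
Qed.
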